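(* Let $x,y:\mathbb{Z}\to\mathbb{R}$ be the coordinates of the vertices of a polygon indexed by $u\in\mathbb{Z}$, and let $X+ih_1$ and $Y+ih_2$ be their discrete analytic extensions (as in the context). Write $h=(h_1,h_2)$. Then there exists $F:\mathbb{Z}^2\to\mathbb{R}$ such that for all $(u,v)\in\mathbb{Z}^2$ $$F(u+1,v)-F(u,v)=-\big[h(u+\tfrac12,v-\tfrac12),\,h(u+\tfrac12,v+\tfrac12)\big],$$ $$F(u,v+1)-F(u,v)=\big[h(u-\tfrac12,v+\tfrac12),\,h(u+\tfrac12,v+\tfrac12)\big].$$
   Context: $[X,Y]$ is the determinant of the $2\times2$ matrix with columns $X,Y$. Let $(\mathbb{Z}^2)^*=(\mathbb{Z}+\tfrac12)^2$ be the dual lattice. Functions $g:\mathbb{Z}^2\to\mathbb{R}$ and $k:(\mathbb{Z}^2)^*\to\mathbb{R}$ are complex conjugate (and $g+ik$ is called discrete analytic) if for all $(u,v)\in\mathbb{Z}^2$: $g(u+1,v)-g(u,v)=k(u+\tfrac12,v+\tfrac12)-k(u+\tfrac12,v-\tfrac12)$ and $g(u,v+1)-g(u,v)=-(k(u+\tfrac12,v+\tfrac12)-k(u-\tfrac12,v+\tfrac12))$ (discrete Cauchy–Riemann equations). The discrete analytic extension of $x$ is the unique discrete analytic $X+ih_1$ with $X(u,0)=x(u)$ and $h_1(u+\tfrac12,\tfrac12)=-h_1(u+\tfrac12,-\tfrac12)$ for all $u$; similarly $Y+ih_2$ extends $y$. *)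

From Stdlib Require Import Reals ZArith.
Open Scope R_scope.

Definition det2 (X Y : R * R) : R := fst X * snd Y - snd X * fst Y.

(* Functions on Z^2 have type Z -> Z -> R.
   Functions on the dual lattice (Z+1/2)^2 are encoded as k : Z -> Z -> R,
   where  k a b  stands for the value at the point (a + 1/2, b + 1/2). *)

Definition complex_conjugate (g k : Z -> Z -> R) : Prop :=
  forall u v : Z,
    g (u + 1)%Z v - g u v = k u v - k u (v - 1)%Z /\
    g u (v + 1)%Z - g u v = - (k u v - k (u - 1)%Z v).

Definition discrete_analytic_extension (x : Z -> R) (X h : Z -> Z -> R) : Prop :=
  complex_conjugate X h /\
  (forall u : Z, X u 0%Z = x u) /\
  (forall u : Z, h u 0%Z = - h u (-1)%Z).

(** The 1-form [(du) -[h(u,v-1), h(u,v)] + (dv) [h(u-1,v), h(u,v)]] on [Z^2]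
    is closed: its defect around the unit square at [(u,v)] equals
    [[h(u,v), h(u+1,v) + h(u-1,v) + h(u,v+1) + h(u,v-1)]], and the
    Cauchy-Riemann equations make [h1] and [h2] discrete harmonic, so the
    neighbour sum is [4 h(u,v)] and the defect vanishes.  A closed discrete
    1-form on [Z^2] has a primitive [F], obtained by summing along the
    axis [v = 0] and then along vertical lines. *)

From Stdlib Require Import Reals ZArith Lra Lia.
Open Scope R_scope.

Fixpoint nat_sum (f : nat -> R) (n : nat) : R :=
  match n with O => 0 | S m => nat_sum f m + f m end.

Definition Z_primitive (a : Z -> R) (z : Z) : R :=
  if Z_le_dec 0 z then nat_sum (fun k => a (Z.of_nat k)) (Z.to_nat z)
  else - nat_sum (fun k => a (- Z.of_nat k - 1)%Z) (Z.to_nat (- z)).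

Lemma Z_primitive0 (a : Z -> R) : Z_primitive a 0%Z = 0.
Proof. reflexivity. Qed.

Lemma Z_primitive_step (a : Z -> R) (z : Z) :
  Z_primitive a (z + 1)%Z - Z_primitive a z = a z.
Proof.
  unfold Z_primitive.
  destruct (Z_le_dec 0 z) as [Hz | Hz].
  - destruct (Z_le_dec 0 (z + 1)) as [_ | Hz1]; [| lia].
    replace (Z.to_nat (z + 1)) with (S (Z.to_nat z)) by lia.
    simpl. rewrite Z2Nat.id by lia. lra.
  - destruct (Z.to_nat (- z)) as [| n] eqn:Hn; [lia |].
    simpl. replace (- Z.of_nat n - 1)%Z with z by lia.
    destruct (Z_le_dec 0 (z + 1)) as [Hz1 | Hz1].
    + replace n with O by lia. replace (Z.to_nat (z + 1)) with O by lia.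
      simpl. lra.
    + replace (Z.to_nat (- (z + 1))) with n by lia. lra.
Qed.

Lemma Z_shift_invariant_const (f : Z -> R) :
  (forall z, f (z + 1)%Z = f z) -> forall z, f z = f 0%Z.
Proof.
  intros Hf.
  apply Z.peano_ind; [reflexivity | |].
  - intros z Hz. rewrite <- Z.add_1_r, Hf. exact Hz.
  - intros z Hz. rewrite <- Hz, <- (Hf (Z.pred z)). f_equal. lia.
Qed.

Lemma closed_form_exact (A B : Z -> Z -> R) :
  (forall u v, A u v + B (u + 1)%Z v = B u v + A u (v + 1)%Z) ->
  exists F : Z -> Z -> R, forall u v,
    F (u + 1)%Z v - F u v = A u v /\ F u (v + 1)%Z - F u v = B u v.
Proof.
  intros Hclosed.
  set (F := fun u v => Z_primitive (fun w => A w 0%Z) u + Z_primitive (B u) v).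
  exists F. intros u v. split.
  - set (defect := fun v => F (u + 1)%Z v - F u v - A u v).
    assert (Hdefect_const : forall v, defect (v + 1)%Z = defect v).
    { intros w. unfold defect, F.
      pose proof (Z_primitive_step (B (u + 1)%Z) w).
      pose proof (Z_primitive_step (B u) w).
      pose proof (Hclosed u w). lra. }
    assert (Hdefect0 : defect 0%Z = 0).
    { unfold defect, F. rewrite !Z_primitive0.
      pose proof (Z_primitive_step (fun w => A w 0%Z) u). simpl in *. lra. }
    pose proof (Z_shift_invariant_const defect Hdefect_const v) as Hv.
    unfold defect in Hv, Hdefect0. lra.
  - unfold F. pose proof (Z_primitive_step (B u) v). lra.
Qed.

Lemma conjugate_harmonic (g k : Z -> Z -> R) :
  complex_conjugate g k -> forall u v,
  k (u + 1)%Z v + k (u - 1)%Z v + k u (v + 1)%Z + k u (v - 1)%Z = 4 * k u v.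
Proof.
  intros Hcr u v.
  destruct (Hcr u v) as [Hu Hv].
  destruct (Hcr u (v + 1)%Z) as [Hu' _].
  destruct (Hcr (u + 1)%Z v) as [_ Hv'].
  replace (v + 1 - 1)%Z with v in Hu' by lia.
  replace (u + 1 - 1)%Z with u in Hv' by lia.
  lra.
Qed.

Lemma det2_neighbour_form_closed (h1 h2 : Z -> Z -> R) :
  (forall u v, h1 (u + 1)%Z v + h1 (u - 1)%Z v + h1 u (v + 1)%Z + h1 u (v - 1)%Z
                 = 4 * h1 u v) ->
  (forall u v, h2 (u + 1)%Z v + h2 (u - 1)%Z v + h2 u (v + 1)%Z + h2 u (v - 1)%Z
                 = 4 * h2 u v) ->
  forall u v,
    - det2 (h1 u (v - 1)%Z, h2 u (v - 1)%Z) (h1 u v, h2 u v)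
    + det2 (h1 u v, h2 u v) (h1 (u + 1)%Z v, h2 (u + 1)%Z v)
    = det2 (h1 (u - 1)%Z v, h2 (u - 1)%Z v) (h1 u v, h2 u v)
    - det2 (h1 u v, h2 u v) (h1 u (v + 1)%Z, h2 u (v + 1)%Z).
Proof.
  intros Hh1 Hh2 u v. unfold det2; simpl.
  assert (Hn1 := Hh1 u v). assert (Hn2 := Hh2 u v).
  (* the difference of the two sides is [[h(u,v), neighbour sum - 4 h(u,v)]] *)
  apply Rminus_diag_uniq.
  replace (h1 (u + 1)%Z v) with
    (4 * h1 u v - h1 (u - 1)%Z v - h1 u (v + 1)%Z - h1 u (v - 1)%Z) by lra.
  replace (h2 (u + 1)%Z v) with
    (4 * h2 u v - h2 (u - 1)%Z v - h2 u (v + 1)%Z - h2 u (v - 1)%Z) by lra.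
  ring.
Qed.

Theorem mainTheorem10 (x y : Z -> R) (X h1 Y h2 : Z -> Z -> R)
  (HX : discrete_analytic_extension x X h1)
  (HY : discrete_analytic_extension y Y h2) :
  exists F : Z -> Z -> R, forall u v : Z,
    F (u + 1)%Z v - F u v =
      - det2 (h1 u (v - 1)%Z, h2 u (v - 1)%Z) (h1 u v, h2 u v) /\
    F u (v + 1)%Z - F u v =
      det2 (h1 (u - 1)%Z v, h2 (u - 1)%Z v) (h1 u v, h2 u v).
Proof.
  destruct HX as [HcrX _], HY as [HcrY _].
  apply closed_form_exact. intros u v.
  pose proof (det2_neighbour_form_closed h1 h2
                (conjugate_harmonic X h1 HcrX) (conjugate_harmonic Y h2 HcrY) u v)
    as Hclosed.
  replace (u + 1 - 1)%Z with u by lia.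
  replace (v + 1 - 1)%Z with v by lia.
  unfold det2 in *; simpl in *. lra.
Qed.
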